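(* Let $(M,g,J)$ be almost Hermitian of even complex dimension $m=2n$, $n\geq1$, with complex spinor bundle $S^cM$ of a spin$^c$ structure, and let $\mathcal{V}=S_{n-1}\oplus S_n$. Then Clifford multiplication with $\Lambda^{1,1}M$-forms on $\mathcal{V}$ is injective: if $x\in M$, $\eta\in\Lambda^{1,1}_xM$ and $\gamma(\eta)\varphi=0$ for all $\varphi\in\mathcal{V}_x$, then $\eta=0$.
   Context: $\Omega=g(\cdot,J\cdot)$; $\gamma$ is Clifford multiplication; $S^cM=S_0\oplus\cdots\oplus S_m$ with $S_j$ the eigenbundle of $\gamma(\Omega)$ for eigenvalue $\mathbf{i}(m-2j)$. $\Lambda^{1,1}M$ denotes the bundle of real $J$-invariant $2$-forms. *)

From HB Require Import structures.
From mathcomp Require Import all_boot all_order all_algebra.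
From mathcomp Require Import complex.
Set Implicit Arguments. Unset Strict Implicit. Unset Printing Implicit Defensive.
Import Order.TTheory GRing.Theory Num.Theory.
Local Open Scope ring_scope.
Local Open Scope complex_scope.

(* Pointwise linear-algebra model of the tangent space T_xM at a point x:
   T_xM = R^d (d = 2m real dimension) with the standard inner product g and
   its standard orthonormal basis e_0,...,e_{d-1}.  Bilinear forms / linear
   maps are represented by their d x d matrices in this basis. *)

Definition almost_hermitian (R : rcfType) (d : nat) (J : 'M[R]_d) : Prop :=
  J^T *m J = 1%:M /\ J *m J = - 1%:M.

(* The Kaehler form Omega = g(., J .) has matrix Omega(e_i,e_j) = g(e_i, J e_j) = J i j. *)
Definition kaehler_form (R : rcfType) (d : nat) (J : 'M[R]_d) : 'M[R]_d :=
  \matrix_(i, j) J i j.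

(* eta is a real 2-form (eta(e_i,e_j) = A i j, A skew) which is J-invariant:
   eta(JX,JY) = eta(X,Y), i.e. eta is a section of Lambda^{1,1}. *)
Definition is_form11 (R : rcfType) (d : nat) (J A : 'M[R]_d) : Prop :=
  A^T = - A /\ J^T *m A *m J = A.

(* Clifford multiplication by the basis vectors e_i on a complex spinor
   module C^N: c i = gamma(e_i), satisfying X.X = -|X|^2, i.e.
   c_i c_j + c_j c_i = -2 delta_ij. *)
Definition clifford_rel (R : rcfType) (d N : nat) (c : 'I_d -> 'M[R[i]]_N) : Prop :=
  forall i j : 'I_d,
    c i *m c j + c j *m c i = (if i == j then - 2%:R else 0) *: (1%:M : 'M[R[i]]_N).

(* Clifford multiplication by a 2-form eta = sum_{i<j} eta(e_i,e_j) e_i ^ e_j: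
   gamma(eta) = sum_{i<j} eta(e_i,e_j) gamma(e_i) gamma(e_j). *)
Definition gamma2 (R : rcfType) (d N : nat) (c : 'I_d -> 'M[R[i]]_N) (A : 'M[R]_d)
  : 'M[R[i]]_N :=
  \sum_(i < d) \sum_(j < d | (i < j)%N) (A i j)%:C *: (c i *m c j).

Definition in_S (R : rcfType) (m N : nat) (J : 'M[R]_(2 * m))
  (c : 'I_(2 * m) -> 'M[R[i]]_N) (j : nat) (phi : 'cV[R[i]]_N) : Prop :=
  gamma2 c (kaehler_form J) *m phi = ('i * (m%:R - (2 * j)%:R)) *: phi.

Definition in_V (R : rcfType) (n N : nat) (J : 'M[R]_(2 * (2 * n)))
  (c : 'I_(2 * (2 * n)) -> 'M[R[i]]_N) (phi : 'cV[R[i]]_N) : Prop :=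
  exists phi1 phi2, in_S J c (n.-1) phi1 /\ in_S J c n phi2 /\ phi = phi1 + phi2.

(* Write cl v for Clifford multiplication by a tangent vector v, and put
   ann v = cl v + i cl (J v) and cre v = cl v - i cl (J v), i.e. Clifford
   multiplication by 2 v^{0,1} and 2 v^{1,0}.  For a skew form eta commuting
   with J one has [gamma eta, ann v] = -2 ann (eta v), and likewise for cre; for
   eta = Omega this says that cre v maps S_j into S_(j+1) and ann v maps S_(j+1)
   into S_j.  The ann v anticommute pairwise, so they have a common nonzero null
   vector, which lies in S_0.  Applying n-1 operators cre v_l, each v_l orthogonal
   to u = eta v, J u and the earlier v_l, J v_l, gives psi <> 0 in S_(n-1) with
   ann u psi = 0.  Then phi = cre u psi lies in S_n and ann v phi in S_(n-1); as
   gamma eta kills both, 0 = [gamma eta, ann v] phi = -2 ann u phi, whereas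
   ann u (cre u psi) = -4 |u|^2 psi.  Hence eta v = 0 for every v. *)

From HB Require Import structures.
From mathcomp Require Import all_boot all_order all_algebra.
From mathcomp Require Import complex ring zify.
Import Order.TTheory GRing.Theory Num.Theory.
Local Open Scope ring_scope.
Local Open Scope complex_scope.
Set Implicit Arguments. Unset Strict Implicit. Unset Printing Implicit Defensive.

Section CommutatorCalculus.
Variables (K : comPzRingType) (N : nat).
Implicit Types (O P Q U V : 'M[K]_N) (x : 'cV[K]_N).

Definition commutator P Q := P *m Q - Q *m P.
Definition anticommutator P Q := P *m Q + Q *m P.

Lemma commutator_eigen_shift O P x lam s :
  commutator O P = s *: P -> O *m x = lam *: x ->
  O *m (P *m x) = (lam + s) *: (P *m x).
Proof.
move=> OP Ox; have OPE : O *m P = P *m O + s *: P by rewrite -OP addrC subrK.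
by rewrite mulmxA OPE mulmxDl -mulmxA Ox -scalemxAl -scalemxAr -scalerDl.
Qed.

Lemma commutator_kernel O P Q x s :
  commutator O P = s *: Q -> O *m x = 0 -> O *m (P *m x) = 0 ->
  s *: (Q *m x) = 0.
Proof.
move=> OP Ox OPx; rewrite scalemxAl -OP mulmxBl -mulmxA OPx -(mulmxA P) Ox.
by rewrite mulmx0 subr0.
Qed.

Lemma anticommutator_kernel P Q x k :
  anticommutator P Q = k *: 1%:M -> P *m x = 0 -> P *m (Q *m x) = k *: x.
Proof.
move=> PQ Px; have PQE : P *m Q = k *: 1%:M - Q *m P by rewrite -PQ addrK.
by rewrite mulmxA PQE mulmxBl -mulmxA Px mulmx0 subr0 -scalemxAl mul1mx.
Qed.

Lemma commutator_linear O P Q s :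
  commutator O (P + s *: Q) = commutator O P + s *: commutator O Q.
Proof.
rewrite /commutator mulmxDl mulmxDr -scalemxAl -scalemxAr scalerBr.
by rewrite opprD addrACA.
Qed.

Lemma anticommutator_expand P Q U V s t :
  anticommutator (P + s *: Q) (U + t *: V) = anticommutator P U +
    t *: anticommutator P V + s *: anticommutator Q U + (s * t) *: anticommutator Q V.
Proof.
rewrite /anticommutator !mulmxDl !mulmxDr -!scalemxAl -!scalemxAr !scalerA !scalerDr.
set pu := P *m U; set up := U *m P; set pv := P *m V; set vp := V *m P.
set qu := Q *m U; set uq := U *m Q; set qv := Q *m V; set vq := V *m Q.
by rewrite [t * s]mulrC; apply/matrixP => i j; rewrite !mxE; ring.
Qed.

Lemma anticommuting_common_kernel (Ts : seq 'M[K]_N) x0 : x0 != 0 ->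
  {in Ts &, forall P Q, P *m Q = - (Q *m P)} -> {in Ts, forall P, P *m P = 0} ->
  exists2 x : 'cV[K]_N, x != 0 & {in Ts, forall P, P *m x = 0}.
Proof.
move=> x0_neq0; elim: Ts => [|P Ts IH] anti sq; first by exists x0.
have [||x x_neq0 Tsx] := IH.
- by move=> Q Q' TsQ TsQ'; apply: anti; rewrite inE ?TsQ ?TsQ' orbT.
- by move=> Q TsQ; apply: sq; rewrite inE TsQ orbT.
have [Px0|Px_neq0] := eqVneq (P *m x) 0.
  by exists x => // Q; rewrite inE => /predU1P [->|/Tsx].
exists (P *m x) => // Q; rewrite inE => /predU1P [->|TsQ].
  by rewrite mulmxA sq ?mem_head ?mul0mx.
by rewrite mulmxA anti ?mem_head ?inE ?TsQ ?orbT // mulNmx -mulmxA Tsx ?mulmx0 ?oppr0.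
Qed.

End CommutatorCalculus.

Definition dot (K : pzRingType) (d : nat) (u v : 'cV[K]_d) : K := (u^T *m v) 0 0.

Lemma dotE (K : pzRingType) d (u v : 'cV[K]_d) : dot u v = \sum_k u k 0 * v k 0.
Proof. by rewrite /dot mxE; apply: eq_bigr => k _; rewrite mxE. Qed.

Lemma dotC (K : comPzRingType) d (u v : 'cV[K]_d) : dot u v = dot v u.
Proof. by rewrite !dotE; apply: eq_bigr => k _; rewrite mulrC. Qed.

Lemma dot_self_eq0 (R : realDomainType) d (v : 'cV[R]_d) : dot v v = 0 -> v = 0.
Proof.
rewrite dotE => vv0; apply/matrixP => k l; rewrite (ord1 l) mxE.
have : \sum_k v k 0 ^+ 2 = 0 by under eq_bigr do rewrite expr2.
move=> /(psumr_eq0P (fun k _ => sqr_ge0 (v k 0))) /(_ k isT) /eqP.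
by rewrite sqrf_eq0 => /eqP.
Qed.

Definition orth (K : pzRingType) d (ws : seq 'cV[K]_d) (v : 'cV[K]_d) : bool :=
  all (fun w => dot w v == 0) ws.

Lemma orth_exists (F : fieldType) d (ws : seq 'cV[F]_d) :
  (size ws < d)%N -> exists2 v : 'cV[F]_d, v != 0 & orth ws v.
Proof.
move=> ws_small; pose W : 'M[F]_(size ws, d) := \matrix_(i, j) (nth 0 ws i) j 0.
have ker_neq0 : kermx W^T != 0.
  rewrite -mxrank_eq0 mxrank_ker -lt0n subn_gt0.
  exact: leq_ltn_trans (rank_leq_col _) ws_small.
have [i ker_i] : exists i, row i (kermx W^T) != 0.
  apply/existsP; apply: contraNT ker_neq0; rewrite negb_exists => /forallP ker0.
  by apply/eqP/row_matrixP => i; rewrite row0; apply/eqP/negbNE.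
exists (row i (kermx W^T))^T; first by rewrite trmx_eq0.
apply/allP => _ /(nthP 0) [j j_lt <-]; rewrite dotE.
have : (row i (kermx W^T) *m W^T) 0 (Ordinal j_lt) = 0.
  by rewrite -row_mul mulmx_ker row0 mxE.
rewrite mxE => ker_row; rewrite -[X in _ == X]ker_row; apply/eqP/eq_bigr => l _.
by rewrite !mxE mulrC.
Qed.

Lemma skew_mx_entry (V : zmodType) d (A : 'M[V]_d) :
  A^T = - A -> forall i j, A i j = - A j i.
Proof. by move=> skewA i j; have := congr1 (fun M : 'M_d => M j i) skewA; rewrite !mxE. Qed.

Lemma skew_mx_diag (R : numDomainType) d (A : 'M[R]_d) :
  A^T = - A -> forall i, A i i = 0.
Proof.
move=> skewA i; apply/eqP; have := skew_mx_entry skewA i i.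
by move/eqP; rewrite -subr_eq0 opprK -mulr2n mulrn_eq0.
Qed.

Lemma sum_if_eq (I : finType) (V : nmodType) (F : I -> V) k :
  \sum_j (if j == k then F j else 0) = F k.
Proof. by rewrite -big_mkcond big_pred1_eq. Qed.

Lemma mulii (R : rcfType) : 'i * 'i = -1 :> R[i].
Proof. by rewrite -expr2 sqr_i. Qed.

Lemma i_neq0 (R : rcfType) : 'i != 0 :> R[i].
Proof. by apply/eqP; case; apply/eqP/oner_neq0. Qed.

Lemma two_neq0 (R : rcfType) : 2%:R != 0 :> R[i].
Proof. by rewrite pnatr_eq0. Qed.

Section CliffordModule.
Variables (R : rcfType) (d N : nat) (c : 'I_d -> 'M[R[i]]_N).
Hypothesis cliff : clifford_rel c.

Definition cl (v : 'cV[R]_d) : 'M[R[i]]_N := \sum_k (v k 0)%:C *: c k.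

Lemma clD u v : cl (u + v) = cl u + cl v.
Proof. by rewrite /cl -big_split; apply: eq_bigr => k _; rewrite mxE rmorphD scalerDl. Qed.

Lemma clZ a v : cl (a *: v) = a%:C *: cl v.
Proof. by rewrite /cl scaler_sumr; apply: eq_bigr => k _; rewrite mxE rmorphM scalerA. Qed.

Lemma clN v : cl (- v) = - cl v.
Proof. by rewrite -scaleN1r clZ rmorphN rmorph1 scaleN1r. Qed.

Lemma cl_delta k : cl (delta_mx k 0) = c k.
Proof.
rewrite /cl (bigD1 k) //= mxE !eqxx rmorph1 scale1r big1 ?addr0 // => j /negbTE jk.
by rewrite mxE jk rmorph0 scale0r.
Qed.

Lemma cl_anticomm u v :
  anticommutator (cl u) (cl v) = (- 2%:R * (dot u v)%:C) *: 1%:M.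
Proof.
have clM w w' : cl w *m cl w' =
    \sum_k \sum_l ((w k 0)%:C * (w' l 0)%:C) *: (c k *m c l).
  rewrite mulmx_suml; apply: eq_bigr => k _.
  rewrite -scalemxAl mulmx_sumr scaler_sumr; apply: eq_bigr => l _.
  by rewrite -scalemxAr scalerA.
rewrite /anticommutator !clM [X in _ + X]exchange_big -big_split /=.
rewrite dotE rmorph_sum mulr_sumr scaler_suml; apply: eq_bigr => k _.
rewrite -big_split /= (bigD1 k) //= big1 ?addr0.
  by rewrite mulrC -scalerDr cliff eqxx scalerA rmorphM; congr (_ *: _); ring.
move=> l /negbTE lk; rewrite [(v l 0)%:C * _]mulrC -scalerDr cliff.
by rewrite eq_sym lk scale0r scaler0.
Qed.

Lemma c_sq k : c k *m c k = - 1%:M.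
Proof.
apply: (scalerI (two_neq0 R)); rewrite scaler_nat mulr2n cliff eqxx.
by rewrite scalerN scaleNr.
Qed.

Lemma c_anticomm i j : i != j -> c i *m c j = - (c j *m c i).
Proof. by move=> /negbTE ij; apply/eqP; rewrite -addr_eq0 cliff ij scale0r. Qed.

Lemma c_commutator3 i j k : c i *m c j *m c k - c k *m c i *m c j =
  (if j == k then - 2%:R else 0) *: c i - (if i == k then - 2%:R else 0) *: c j.
Proof.
have cjk : c j *m c k = (if j == k then - 2%:R else 0) *: 1%:M - c k *m c j.
  by rewrite -(cliff j k) addrK.
have cki : c k *m c i = (if i == k then - 2%:R else 0) *: 1%:M - c i *m c k.
  by rewrite -(cliff i k) [X in X - _]addrC addrK.
rewrite -mulmxA cjk cki mulmxBr mulmxBl -scalemxAr -scalemxAl mulmx1 mul1mx mulmxA.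
by rewrite opprB addrA addrNK.
Qed.

Definition cl2 (A : 'M[R]_d) : 'M[R[i]]_N :=
  \sum_i \sum_j (A i j)%:C *: (c i *m c j).

Lemma cl2_gamma2 (A : 'M[R]_d) : A^T = - A -> cl2 A = 2%:R *: gamma2 c A.
Proof.
move=> skewA; rewrite /cl2 /gamma2 scaler_nat mulr2n.
have split_ij i j : (A i j)%:C *: (c i *m c j) =
    (if (i < j)%N then (A i j)%:C *: (c i *m c j) else 0) +
    (if (j < i)%N then (A j i)%:C *: (c j *m c i) else 0).
  case: (ltngtP i j) => [ij|ji|/val_inj ->]; first by rewrite addr0.
  - rewrite add0r (skew_mx_entry skewA) c_anticomm; last by rewrite neq_ltn ji orbT.
    by rewrite rmorphN scaleNr scalerN opprK.
  - by rewrite skew_mx_diag // rmorph0 scale0r addr0.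
under eq_bigr do under eq_bigr do rewrite split_ij.
under eq_bigr do rewrite big_split /=.
rewrite big_split /= [X in _ + X]exchange_big /=.
by congr (_ + _); apply: eq_bigr => i _; rewrite [RHS]big_mkcond.
Qed.

Lemma cl2_commutator_c (A : 'M[R]_d) k : A^T = - A ->
  commutator (cl2 A) (c k) = 4%:R *: \sum_j (A k j)%:C *: c j.
Proof.
move=> skewA.
have -> : commutator (cl2 A) (c k) = \sum_i \sum_j
    ((A i j)%:C *: (c i *m c j *m c k - c k *m c i *m c j)).
  rewrite /commutator /cl2 mulmx_suml mulmx_sumr -sumrB; apply: eq_bigr => i _.
  rewrite mulmx_suml mulmx_sumr -sumrB; apply: eq_bigr => j _.
  by rewrite -scalemxAl -scalemxAr scalerBr mulmxA.
have expand i j : (A i j)%:C *: (c i *m c j *m c k - c k *m c i *m c j) =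
    (if j == k then ((A i j)%:C * - 2%:R) *: c i else 0) -
    (if i == k then ((A i j)%:C * - 2%:R) *: c j else 0).
  rewrite c_commutator3 scalerBr.
  by case: (j == k); case: (i == k); rewrite ?scalerA ?mulr0 ?scale0r ?scaler0.
under eq_bigr do under eq_bigr do rewrite expand.
under eq_bigr do rewrite sumrB sum_if_eq.
rewrite sumrB.
have -> : \sum_i \sum_j (if i == k then ((A i j)%:C * - 2%:R) *: c j else 0) =
    \sum_j ((A k j)%:C * - 2%:R) *: c j.
  by rewrite exchange_big; apply: eq_bigr => j _; rewrite sum_if_eq.
have -> : 4%:R = 2%:R + 2%:R :> R[i] by rewrite -natrD.
rewrite -sumrB scalerDl !scaler_sumr -big_split /=; apply: eq_bigr => j _.
rewrite !scalerA (skew_mx_entry skewA j k) rmorphN -scalerBl -scalerDl.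
by congr (_ *: _); ring.
Qed.

Lemma cl2_commutator_cl (A : 'M[R]_d) v : A^T = - A ->
  commutator (cl2 A) (cl v) = - 4%:R *: cl (A *m v).
Proof.
move=> skewA.
transitivity (\sum_k \sum_j (4%:R * (v k 0)%:C * (A k j)%:C) *: c j).
  rewrite /commutator /cl mulmx_sumr mulmx_suml -sumrB; apply: eq_bigr => k _.
  rewrite -scalemxAl -scalemxAr -scalerBr -/(commutator _ _) cl2_commutator_c //.
  rewrite scalerA scaler_sumr; apply: eq_bigr => j _.
  by rewrite scalerA; congr (_ *: _); ring.
rewrite exchange_big /cl scaler_sumr; apply: eq_bigr => j _.
rewrite mxE scalerA rmorph_sum mulr_sumr scaler_suml; apply: eq_bigr => k _.
by rewrite (skew_mx_entry skewA j k) rmorphM rmorphN; congr (_ *: _); ring.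
Qed.

Lemma gamma2_commutator_cl (A : 'M[R]_d) v : A^T = - A ->
  commutator (gamma2 c A) (cl v) = - 2%:R *: cl (A *m v).
Proof.
move=> skewA; have -> : gamma2 c A = 2%:R^-1 *: cl2 A.
  by rewrite cl2_gamma2 // scalerA mulVf ?two_neq0 // scale1r.
rewrite /commutator -scalemxAl -scalemxAr -scalerBr -/(commutator _ _).
rewrite cl2_commutator_cl // scalerA.
by congr (_ *: _); rewrite -[4%:R]/(2 * 2)%:R natrM mulrN mulKf ?two_neq0.
Qed.

End CliffordModule.

Lemma kaehler_formE (R : rcfType) d (J : 'M[R]_d) : kaehler_form J = J.
Proof. by apply/matrixP => i j; rewrite mxE. Qed.

Section AlmostHermitian.
Variables (R : rcfType) (d : nat) (J : 'M[R]_d).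
Hypothesis hermJ : almost_hermitian J.
Implicit Types u v : 'cV[R]_d.

Lemma trmx_J : J^T = - J.
Proof.
case: hermJ => JTJ JJ.
by rewrite -[J^T]mulmx1 -(opprK 1%:M) -JJ mulmxN mulmxA JTJ mul1mx.
Qed.

Lemma mulmxJJ v : J *m (J *m v) = - v.
Proof. by case: hermJ => _ JJ; rewrite mulmxA JJ mulNmx mul1mx. Qed.

Lemma dot_JJ u v : dot (J *m u) (J *m v) = dot u v.
Proof. by case: hermJ => JTJ _; rewrite /dot trmx_mul mulmxA -(mulmxA u^T) JTJ mulmx1. Qed.

Lemma dot_Jl u v : dot (J *m u) v = - dot u (J *m v).
Proof. by rewrite /dot trmx_mul trmx_J mulmxN mulNmx mulmxA mxE. Qed.

Lemma dot_J_self u : dot u (J *m u) = 0.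
Proof.
have : dot u (J *m u) = - dot u (J *m u) by rewrite -dot_Jl dotC.
by move/eqP; rewrite -subr_eq0 opprK -mulr2n mulrn_eq0 => /eqP.
Qed.

Lemma form11_commute A : is_form11 J A -> A *m J = J *m A.
Proof.
case=> _ JAJ; rewrite trmx_J mulNmx in JAJ.
case: hermJ => _ JJ.
by rewrite -{1}JAJ !mulNmx -!mulmxA JJ !mulmxN mulmx1 opprK.
Qed.

End AlmostHermitian.

Section LadderOperators.
Variables (R : rcfType) (d N : nat) (c : 'I_d -> 'M[R[i]]_N) (J : 'M[R]_d).
Hypotheses (cliff : clifford_rel c) (hermJ : almost_hermitian J).
Implicit Types (u v w : 'cV[R]_d) (x : 'cV[R[i]]_N).

Definition cre v := cl c v - 'i *: cl c (J *m v).
Definition ann v := cl c v + 'i *: cl c (J *m v).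

Lemma ann_anticomm v w : anticommutator (ann v) (ann w) = 0.
Proof.
rewrite anticommutator_expand !cl_anticomm // dot_JJ // dot_Jl // rmorphN /=.
by rewrite !scalerA -!scalerDl mulii -[RHS](scale0r 1%:M); congr (_ *: _); ring.
Qed.

Lemma ann_sq v : ann v *m ann v = 0.
Proof.
apply: (scalerI (two_neq0 R)); rewrite scaler0 scaler_nat mulr2n.
exact: ann_anticomm.
Qed.

Lemma ann_cre v : anticommutator (ann v) (cre v) = (- 4%:R * (dot v v)%:C) *: 1%:M.
Proof.
rewrite /cre -scaleNr anticommutator_expand !cl_anticomm // dot_JJ // dot_Jl //.
rewrite dot_J_self // oppr0 rmorph0 !scalerA -!scalerDl mulrN mulii.
by rewrite !mulr0 !addr0 opprK mul1r -mulrDl -opprD -natrD.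
Qed.

Lemma ann_cre_orth w v : dot w v = 0 -> dot (J *m w) v = 0 ->
  anticommutator (ann w) (cre v) = 0.
Proof.
move=> wv Jwv; have wJv : dot w (J *m v) = 0.
  by apply/eqP; rewrite -oppr_eq0 -dot_Jl // Jwv.
rewrite /cre -scaleNr anticommutator_expand !cl_anticomm // dot_JJ // wv Jwv wJv.
by rewrite rmorph0 !mulr0 !scale0r !scaler0 !addr0.
Qed.

Lemma annJ v : ann (J *m v) = - 'i *: ann v.
Proof.
rewrite /ann mulmxJJ // clN scalerN scalerDr scalerA mulNr mulii opprK scale1r scaleNr.
by rewrite addrC.
Qed.

Lemma creJ v : cre (J *m v) = 'i *: cre v.
Proof.
rewrite /cre mulmxJJ // clN scalerN opprK scalerBr scalerA mulii scaleN1r opprK.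
by rewrite addrC.
Qed.

Lemma gamma2_commutator_ladder A v s : A^T = - A -> A *m J = J *m A ->
  commutator (gamma2 c A) (cl c v + s *: cl c (J *m v)) =
  - 2%:R *: (cl c (A *m v) + s *: cl c (J *m (A *m v))).
Proof.
move=> skewA AJ; rewrite commutator_linear !gamma2_commutator_cl //.
by rewrite mulmxA AJ -mulmxA scalerDr !scalerA mulrC.
Qed.

Lemma gamma2_commutator_ann A v : A^T = - A -> A *m J = J *m A ->
  commutator (gamma2 c A) (ann v) = - 2%:R *: ann (A *m v).
Proof. exact: gamma2_commutator_ladder. Qed.

Lemma gamma2_commutator_cre A v : A^T = - A -> A *m J = J *m A ->
  commutator (gamma2 c A) (cre v) = - 2%:R *: cre (A *m v).
Proof. by move=> skewA AJ; rewrite /cre -!scaleNr gamma2_commutator_ladder. Qed.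

Lemma kaehler_commutator_cre v :
  commutator (gamma2 c J) (cre v) = (- 2%:R * 'i) *: cre v.
Proof. by rewrite (gamma2_commutator_cre v (trmx_J hermJ) (erefl _)) creJ scalerA. Qed.

Lemma kaehler_commutator_ann v :
  commutator (gamma2 c J) (ann v) = (2%:R * 'i) *: ann v.
Proof.
rewrite (gamma2_commutator_ann v (trmx_J hermJ) (erefl _)) annJ scalerA.
by rewrite mulrN mulNr opprK.
Qed.

Lemma annD u v : ann (u + v) = ann u + ann v.
Proof. by rewrite /ann mulmxDr !clD scalerDr addrACA. Qed.

Lemma annZ a v : ann (a *: v) = a%:C *: ann v.
Proof. by rewrite /ann -scalemxAr !clZ scalerDr !scalerA mulrC. Qed.

Lemma ann_delta_sum w : ann w = \sum_k (w k 0)%:C *: ann (delta_mx k 0).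
Proof.
have ann0 : ann 0 = 0 by rewrite -(scale0r 0) annZ rmorph0 scale0r.
rewrite {1}(matrix_sum_delta w) (big_morph ann annD ann0).
by apply: eq_bigr => k _; rewrite big_ord1 annZ.
Qed.

Lemma vacuum_exists : (0 < N)%N ->
  exists2 x : 'cV[R[i]]_N, x != 0 & forall w, ann w *m x = 0.
Proof.
move=> N_gt0; have x0_neq0 : const_mx 1 != 0 :> 'cV[R[i]]_N.
  by apply/eqP => /matrixP /(_ (Ordinal N_gt0) 0) /eqP; rewrite !mxE oner_eq0.
have [||x x_neq0 annx] := anticommuting_common_kernel
  (Ts := [seq ann (delta_mx k 0) | k <- enum 'I_d]) x0_neq0.
- move=> _ _ /mapP [k _ ->] /mapP [l _ ->]; apply/eqP.
  by rewrite -addr_eq0 -/(anticommutator _ _) ann_anticomm.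
- by move=> _ /mapP [k _ ->]; apply: ann_sq.
exists x => // w; rewrite ann_delta_sum mulmx_suml big1 // => k _.
by rewrite -scalemxAl annx ?scaler0 //; apply/mapP; exists k; rewrite ?mem_enum.
Qed.

Lemma vacuum_kaehler x : (forall w, ann w *m x = 0) ->
  2%:R *: (gamma2 c J *m x) = ('i * d%:R) *: x.
Proof.
move=> annx; rewrite scalemxAl -(cl2_gamma2 cliff (trmx_J hermJ)) /cl2 mulmx_suml.
transitivity (\sum_(k < d) 'i *: x).
  apply: eq_bigr => k _.
  have row_k : \sum_j (J k j)%:C *: (c k *m c j) = - (c k *m cl c (J *m delta_mx k 0)).
    rewrite /cl mulmx_sumr -sumrN; apply: eq_bigr => j _.
    by rewrite -colE mxE (skew_mx_entry (trmx_J hermJ) k j) rmorphN scaleNr scalemxAr.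
  have clJx : cl c (J *m delta_mx k 0) *m x = 'i *: (c k *m x).
    apply: (scalerI (i_neq0 R)); rewrite scalerA mulii scaleN1r scalemxAl.
    by apply/eqP; rewrite -addr_eq0 addrC -mulmxDl -[c k]cl_delta -/(ann _) annx.
  rewrite row_k mulNmx -mulmxA clJx -scalemxAr mulmxA c_sq //.
  by rewrite mulNmx mul1mx scalerN opprK.
by rewrite sumr_const card_ord -scaler_nat scalerA mulrC.
Qed.

Lemma ann_cre_kernel_eq0 v x : x != 0 -> ann v *m x = 0 ->
  ann v *m (cre v *m x) = 0 -> v = 0.
Proof.
move=> x_neq0 annx; rewrite (anticommutator_kernel (ann_cre v) annx) => /eqP.
rewrite scaler_eq0 (negbTE x_neq0) orbF mulf_eq0 oppr_eq0 pnatr_eq0 /= fmorph_eq0.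
by move=> /eqP /dot_self_eq0.
Qed.

Lemma cre_neq0 v x : x != 0 -> v != 0 -> ann v *m x = 0 -> cre v *m x != 0.
Proof.
move=> x_neq0 v_neq0 annx; apply: contraNneq v_neq0 => crex0.
by apply/eqP/(ann_cre_kernel_eq0 x_neq0 annx); rewrite crex0 mulmx0.
Qed.

Lemma ann_cre_kernel ws v x : (forall w, orth ws w -> ann w *m x = 0) ->
  forall w, orth [:: v, J *m v & ws] w -> ann w *m (cre v *m x) = 0.
Proof.
move=> annx w /and3P [/eqP vw /eqP Jvw ws_w].
rewrite (anticommutator_kernel (k := 0)) ?scale0r ?annx // ann_cre_orth //.
  by rewrite dotC.
by rewrite dot_Jl // dotC Jvw oppr0.
Qed.

End LadderOperators.

Section Levels.
Variables (R : rcfType) (m N : nat) (c : 'I_(2 * m) -> 'M[R[i]]_N) (J : 'M[R]_(2 * m)).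
Hypotheses (cliff : clifford_rel c) (hermJ : almost_hermitian J).
Implicit Types (u v w : 'cV[R]_(2 * m)) (x : 'cV[R[i]]_N).

Lemma cre_in_S k v x : in_S J c k x -> in_S J c k.+1 (cre c J v *m x).
Proof.
rewrite /in_S kaehler_formE => Ox.
rewrite (commutator_eigen_shift (kaehler_commutator_cre cliff hermJ v) Ox).
by congr (_ *: _); rewrite mulnS natrD; ring.
Qed.

Lemma ann_in_S k v x : in_S J c k.+1 x -> in_S J c k (ann c J v *m x).
Proof.
rewrite /in_S kaehler_formE => Ox.
rewrite (commutator_eigen_shift (kaehler_commutator_ann cliff hermJ v) Ox).
by congr (_ *: _); rewrite mulnS natrD; ring.
Qed.

Lemma vacuum_in_S0 x : (forall w, ann c J w *m x = 0) -> in_S J c 0 x.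
Proof.
move=> annx; rewrite /in_S kaehler_formE; apply: (scalerI (two_neq0 R)).
rewrite vacuum_kaehler // scalerA; congr (_ *: _).
by rewrite muln0 subr0 natrM; ring.
Qed.

(* ws lists the vectors v_l, J v_l of the creation operators applied so far. *)
Lemma level_state_exists u k : (0 < N)%N -> (k < m)%N ->
  exists (psi : 'cV[R[i]]_N) (ws : seq 'cV[R]_(2 * m)),
    [/\ psi != 0, in_S J c k psi, size ws = (2 * k)%N, orth ws u &
        forall w, orth ws w -> ann c J w *m psi = 0].
Proof.
move=> N_gt0; elim: k => [|k IH] k_lt.
  have [x x_neq0 annx] := vacuum_exists cliff hermJ N_gt0.
  by exists x, [::]; split => //; apply: vacuum_in_S0.
have [psi [ws [psi_neq0 psi_k size_ws ws_u annpsi]]] := IH (ltnW k_lt).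
have [|v v_neq0 /and3P [/eqP uv /eqP Juv ws_v]] :=
  orth_exists (ws := [:: u, J *m u & ws]).
  by rewrite /= size_ws; lia.
exists (cre c J v *m psi), [:: v, J *m v & ws]; split.
- exact: cre_neq0 psi_neq0 v_neq0 (annpsi v ws_v).
- exact: cre_in_S.
- by rewrite /= size_ws; lia.
- apply/and3P; split => //; apply/eqP; first by rewrite dotC.
  by rewrite dot_Jl // dotC Juv oppr0.
- exact: ann_cre_kernel.
Qed.

Lemma form11_eq0_of_levels eta j : (0 < N)%N -> (j < m)%N -> is_form11 J eta ->
  (forall phi, in_S J c j phi -> gamma2 c eta *m phi = 0) ->
  (forall phi, in_S J c j.+1 phi -> gamma2 c eta *m phi = 0) ->
  eta = 0.
Proof.
move=> N_gt0 j_lt eta11 kill_j kill_j1.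
have [skew_eta _] := eta11; have eta_J := form11_commute hermJ eta11.
suff eta_v v : eta *m v = 0.
  apply/matrixP => a b.
  have := congr1 (fun M : 'cV[R]_(2 * m) => M a 0) (eta_v (delta_mx b 0)).
  by rewrite -colE !mxE.
have [psi [ws [psi_neq0 psi_j _ ws_u annpsi]]] :=
  level_state_exists (eta *m v) N_gt0 j_lt.
apply: (ann_cre_kernel_eq0 cliff hermJ psi_neq0 (annpsi _ ws_u)).
have phi_j1 := cre_in_S (eta *m v) psi_j.
have := commutator_kernel (gamma2_commutator_ann cliff v skew_eta eta_J)
  (kill_j1 _ phi_j1) (kill_j _ (ann_in_S v phi_j1)).
by move/eqP; rewrite scaler_eq0 oppr_eq0 pnatr_eq0 => /eqP.
Qed.

End Levels.

Theorem mainTheorem11 (R : rcfType) (n : nat) (hn : (1 <= n)%N)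
  (J : 'M[R]_(2 * (2 * n))) (hJ : almost_hermitian J)
  (c : 'I_(2 * (2 * n)) -> 'M[R[i]]_(2 ^ (2 * n))) (hc : clifford_rel c)
  (eta : 'M[R]_(2 * (2 * n))) (heta : is_form11 J eta)
  (hV : forall phi : 'cV[R[i]]_(2 ^ (2 * n)),
          in_V J c phi -> gamma2 c eta *m phi = 0) :
  eta = 0.
Proof.
have zero_in_S j : in_S J c j 0 by rewrite /in_S mulmx0 scaler0.
apply: (form11_eq0_of_levels hc hJ (j := n.-1) _ _ heta).
- by rewrite expn_gt0.
- by lia.
- by move=> phi phi_S; apply: hV; exists phi, 0; rewrite addr0.
- by rewrite prednK // => phi phi_S; apply: hV; exists 0, phi; rewrite add0r.
Qed.
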